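(* Let $H$ be a graph on $h$ vertices with $\chi(H)=r\geq 3$ and $\gcd(H)=1$. For every $\alpha>0$ there exists $n_0=n_0(\alpha,H)$ such that if $G$ is a balanced $r$-partite graph on $rn$ vertices with $n\geq n_0$ and $\delta^*(G)\geq \frac{r-2}{r-1}n+\alpha n$, then for every vertex $v\in V(G)$ there is a copy of $H$ in $G$ containing $v$.
   Context: For an $r$-partite graph $G$ with vertex classes $V_1,\dots,V_r$, $G$ is balanced if all classes have the same size, and $\delta^*(G)$ is the largest integer $m$ such that for all $i\neq j$ every vertex of $V_i$ has at least $m$ neighbours in $V_j$. For a graph $H$ with $\chi(H)=r$, let $\mathcal C$ be the set of proper $r$-colourings of $H$ with colour classes $X_1^\phi,\dots,X_r^\phi$, and $\mathcal D(H)=\bigcup_{\phi\in\mathcal C}\{|X_i^\phi|-|X_j^\phi|: i,j\in[r]\}$; $\gcd(H)$ is the greatest common divisor of the elements of $\mathcal D(H)$ (and $\infty$ if $\mathcal D(H)=\{0\}$). *)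

From mathcomp Require Import all_boot.
From Stdlib Require Import Reals.
Set Implicit Arguments. Unset Strict Implicit. Unset Printing Implicit Defensive.

Definition simple_graph (T : finType) (e : rel T) : Prop :=
  (forall x y, e x y = e y x) /\ (forall x, e x x = false).

Definition proper_colouring (T : finType) (e : rel T) (k : nat)
  (c : T -> 'I_k) : Prop := forall x y, e x y -> c x != c y.

Definition colourable (T : finType) (e : rel T) (k : nat) : Prop :=
  exists c : T -> 'I_k, proper_colouring e c.

Definition chromatic_number_is (T : finType) (e : rel T) (r : nat) : Prop :=
  colourable e r /\ ~ colourable e r.-1.

Definition colour_class (T : finType) (k : nat) (c : T -> 'I_k) (i : 'I_k)
  : {set T} := [set x | c x == i].

(* gcd(H) = 1 : the only natural number d dividing every element
   |X_i^phi| - |X_j^phi| of D(H) (phi a proper chi(H)-colouring) is d = 1.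
   (If D(H) = {0}, every d divides, so the condition fails, matching gcd = infinity.) *)
Definition gcd_is_one (T : finType) (e : rel T) (r : nat) : Prop :=
  forall d : nat,
    (forall (c : T -> 'I_r), proper_colouring e c ->
       forall i j : 'I_r,
         (d %| (#|colour_class c i| - #|colour_class c j|)) &&
         (d %| (#|colour_class c j| - #|colour_class c i|))) ->
    d = 1.

Definition balanced_rpartite (r n : nat) (eG : rel ('I_r * 'I_n)) : Prop :=
  simple_graph eG /\ (forall i a b, eG (i, a) (i, b) = false).

Definition copy_containing (T U : finType) (e : rel T) (eG : rel U) (v : U)
  : Prop :=
  exists f : T -> U, injective f /\ (forall x y, e x y -> eG (f x) (f y))
                     /\ (exists x, f x = v).

From mathcomp Require Import all_boot.
From mathcomp Require Import perm zify.
Set Implicit Arguments. Unset Strict Implicit. Unset Printing Implicit Defensive.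

(* Write the degree condition as: every vertex misses at most n/(r-1) - n/K
   vertices of each other class.  Then r-1 vertices in distinct classes still
   have a common neighbourhood of linear size in any further class, so the
   root v lies in Omega(n^r) r-tuples forming a clique of G, with one vertex
   in each class, whose members outside v's class are all adjacent to v.
   Iterated averaging over h-subsets (supersaturation) shows that any family
   of r-tuples of positive density contains a complete box S_1 x ... x S_r
   with |S_i| >= h; for our family this is a complete r-partite graph whose
   parts all lie in N(v) except the one in v's class.  Choosing h = |H| and a
   proper r-colouring of H whose colour class of some vertex x0 is sent to
   that part, H embeds with x0 mapped to v. *)

Lemma card_tuple_cons (V : finType) k (P : pred (seq V)) :
  #|[set u : k.+1.-tuple V | P u]| =
  \sum_(t : k.-tuple V) #|[set y : V | P (y :: t)]|.
Proof.
rewrite -sum1_card.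
pose h (p : V * k.-tuple V) : k.+1.-tuple V := [tuple of p.1 :: p.2].
pose h' (u : k.+1.-tuple V) : V * k.-tuple V := (thead u, [tuple of behead u]).
rewrite (reindex h); last first.
  exists h' => [[a s] _|u _]; rewrite /h /h' /=.
    by congr (_, _); apply: val_inj.
  by case/tupleP: u => a s; apply: val_inj.
transitivity (\sum_(y : V) \sum_(t : k.-tuple V) (P (y :: t) : nat)).
  by rewrite pair_big big_mkcond; apply: eq_bigr => -[y t] _; rewrite inE.
rewrite exchange_big; apply: eq_bigr => t _.
by rewrite -sum1_card [RHS]big_mkcond; apply: eq_bigr => y _; rewrite inE.
Qed.

Lemma card_tuple_extend (V : finType) k m (Q E : pred (seq V)) :
  (forall t : k.-tuple V, Q t -> m <= #|[set y | E (y :: t)]|) ->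
  #|[set u : k.-tuple V | Q u]| * m <= #|[set u : k.+1.-tuple V | E u]|.
Proof.
move=> extE; rewrite card_tuple_cons -sum1_card big_distrl big_mkcond /=.
by apply: leq_sum => t _; rewrite inE; case: ifP => // /extE; rewrite mul1n.
Qed.

Lemma card_tuple_nested (V : finType) k m (Q : pred (seq V)) :
  Q [::] -> (forall s, Q s -> size s < k -> m <= #|[set y | Q (y :: s)]|) ->
  m ^ k <= #|[set u : k.-tuple V | Q u]|.
Proof.
move=> Q0; elim: k => [|k IH] extQ.
  by rewrite expn0 card_gt0; apply/set0Pn; exists [tuple]; rewrite inE.
rewrite expnS mulnC; apply: leq_trans (@card_tuple_extend _ k m Q Q _).
  by rewrite leq_mul2r IH ?orbT // => s Qs /ltnW; apply: extQ.
by move=> t Qt; apply: extQ; rewrite ?size_tuple.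
Qed.

Lemma exists_ge_average (U : finType) (A : pred U) (F : U -> nat) M :
  0 < #|A| -> M <= \sum_(u in A) F u -> exists2 u, u \in A & M <= F u * #|A|.
Proof.
move=> A_gt0 sum_ge; apply/exists_inP; apply: contraLR sum_ge => /exists_inPn small.
have [u Au] := card_gt0P A_gt0.
rewrite -ltnNge -(ltn_pmul2r A_gt0) big_distrl /=.
have : \sum_(u in A) F u * #|A| <= \sum_(u in A) M.-1.
  by apply: leq_sum => w /small; rewrite -ltnNge; lia.
rewrite sum_nat_const; have := small u Au; case: M {small} => //= M _; nia.
Qed.

Lemma expn_subn_leq_ffact a h : (a - h) ^ h <= a ^_ h.
Proof.
elim: h a => [|h IH] [|a] //=; first by rewrite exp0n.
by rewrite ffactSS expnS subSS leq_mul ?IH // (leq_trans (leq_subr _ _)).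
Qed.

Lemma ffact_leq_expn a h : a ^_ h <= a ^ h.
Proof.
elim: h a => [|h IH] [|a] //=.
rewrite ffactSS expnS leq_mul // (leq_trans (IH a)) //.
by case: h {IH} => [|h]; rewrite ?expn0 ?leq_exp2r.
Qed.

Lemma bin_leq_mul_expn n a h c :
  n <= (a - h) * c -> 'C(n, h) <= 'C(a, h) * c ^ h.
Proof.
move=> le_n; rewrite -(leq_pmul2r (fact_gt0 h)) bin_ffact mulnAC bin_ffact.
apply: leq_trans (ffact_leq_expn _ _) _.
apply: leq_trans (_ : ((a - h) * c) ^ h <= _).
  by case: h le_n => [|h] le_n; rewrite ?expn0 ?leq_exp2r.
by rewrite expnMn leq_mul2r expn_subn_leq_ffact orbT.
Qed.

Lemma card_large_values (U : finType) (F : U -> nat) n D :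
  0 < n -> (forall u, F u <= n) -> #|U| * n <= (\sum_u F u) * D ->
  #|U| <= #|[set u | n <= F u * (2 * D)]| * (2 * D).
Proof.
move=> n_gt0 F_le dense; set G := [set u | _].
have : (\sum_u F u) * (2 * D) <= \sum_u ((u \in G) * (n * (2 * D)) + n).
  rewrite big_distrl /=; apply: leq_sum => u _; rewrite inE.
  have [_|/ltnW //] := leqP n (F u * (2 * D)).
  by rewrite mul1n (leq_trans _ (leq_addr _ _)) // leq_mul2r F_le orbT.
rewrite big_split /= -big_distrl /= sum_nat_const.
have -> : \sum_u ((u \in G) : nat) = #|G|.
  by rewrite -sum1_card [RHS]big_mkcond; apply: eq_bigr => u _; case: (u \in G).
rewrite -/#|U| => le_sum; rewrite -(leq_pmul2r n_gt0).
move: dense le_sum; set S := \sum_u F u; nia.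
Qed.

Lemma exists_common_subset (U V : finType) (A : U -> {set V}) (G : {set U}) a h :
  h <= #|V| -> (forall t, t \in G -> a <= #|A t|) ->
  exists2 S : {set V}, #|S| = h &
    #|G| * 'C(a, h) <= #|[set t in G | S \subset A t]| * 'C(#|V|, h).
Proof.
move=> h_le large; pose draws := [pred S : {set V} | #|S| == h].
have card_draws : #|draws| = 'C(#|V|, h).
  by rewrite -card_draws; apply: eq_card => S; rewrite inE.
have double_count : \sum_(S in draws) #|[set t in G | S \subset A t]| =
                    \sum_(t in G) 'C(#|A t|, h).
  transitivity (\sum_(S : {set V}) \sum_(t : U)
                  ([&& #|S| == h, t \in G & S \subset A t] : nat)).
    rewrite big_mkcond; apply: eq_bigr => S _; rewrite inE.
    case: eqP => _ /=; last by rewrite big1.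
    by rewrite -sum1_card big_mkcond; apply: eq_bigr => t _; rewrite inE.
  rewrite exchange_big [RHS]big_mkcond; apply: eq_bigr => t _.
  case: (boolP (t \in G)) => tG /=; last by rewrite big1 // => S _; rewrite andbF.
  rewrite -cards_draws -sum1_card [RHS]big_mkcond; apply: eq_bigr => S _.
  by rewrite inE andbC; case: (_ && _).
have draws_gt0 : 0 < #|draws| by rewrite card_draws bin_gt0.
have sum_ge : #|G| * 'C(a, h) <= \sum_(S in draws) #|[set t in G | S \subset A t]|.
  rewrite double_count -sum_nat_const; apply: leq_sum => t tG.
  exact/leq_bin2l/large.
have [S] := exists_ge_average draws_gt0 sum_ge.
by rewrite inE card_draws => /eqP; exists S.
Qed.

(* A fraction 1/(2D) of the k-tuples t have at least n/(2D) extensions y with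
   E (y :: t); averaging over h-subsets S, some S lies in the extension sets
   of a fraction (4D)^-h of them, since 'C(n, h) <= 'C(n/(2D), h) (4D)^h. *)
Lemma dense_slice_extension k h D (V : finType) (E : pred (seq V)) :
  0 < D -> 4 * D * h.+1 <= #|V| ->
  #|V| ^ k.+1 <= #|[set u : k.+1.-tuple V | E u]| * D ->
  exists2 S : {set V}, #|S| = h &
    #|V| ^ k <= #|[set u : k.-tuple V | [forall y in S, E (y :: u)]]|
                * ((4 * D) ^ h * (2 * D)).
Proof.
set n := #|V| => D_gt0 n_large dense.
have n_gt0 : 0 < n by lia.
pose A (t : k.-tuple V) := [set y | E (y :: t)].
pose G := [set t | n <= #|A t| * (2 * D)].
have rich : n ^ k <= #|G| * (2 * D).
  rewrite -[n ^ k](card_tuple k V); apply: (@card_large_values _ (fun t => #|A t|)).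
  - exact: n_gt0.
  - by move=> t; apply: max_card.
  by rewrite card_tuple -expnSr -card_tuple_cons.
pose a := n %/ (2 * D).
have aG t : t \in G -> a <= #|A t|.
  rewrite inE => tG; rewrite -(leq_pmul2r (_ : 0 < 2 * D)) ?muln_gt0 //.
  exact: leq_trans (leq_divM _ _) tG.
have [|S Sh common] := exists_common_subset (h := h) _ aG; first by nia.
have ratio : 'C(n, h) <= 'C(a, h) * (4 * D) ^ h.
  apply: bin_leq_mul_expn; have := divn_eq n (2 * D).
  have := ltn_pmod n (_ : 0 < 2 * D); rewrite muln_gt0 D_gt0 -/a => /(_ isT).
  nia.
set X := #|[set t in G | S \subset A t]| in common.
have G_le : #|G| <= X * (4 * D) ^ h.
  rewrite -(leq_pmul2r (_ : 0 < 'C(n, h))) ?bin_gt0; last by nia.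
  apply: leq_trans (_ : #|G| * 'C(a, h) * (4 * D) ^ h <= _).
    by rewrite -mulnA leq_mul2l ratio orbT.
  by rewrite [X * _ * _]mulnAC leq_mul2r common orbT.
have X_le : X <= #|[set u : k.-tuple V | [forall y in S, E (y :: u)]]|.
  apply: subset_leq_card; apply/subsetP => t; rewrite !inE => /andP[_ /subsetP sub].
  by apply/forall_inP => y /sub; rewrite inE.
exists S => //; apply: (leq_trans rich).
apply: leq_trans (_ : X * (4 * D) ^ h * (2 * D) <= _).
  by rewrite leq_mul2r G_le orbT.
by rewrite -mulnA leq_mul2r X_le orbT.
Qed.

Lemma dense_tuples_contain_box k h D : exists N, forall V : finType, N <= #|V| ->
  forall E : pred (seq V), #|V| ^ k <= #|[set u : k.-tuple V | E u]| * D ->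
  exists S : 'I_k -> {set V}, (forall i, h <= #|S i|) /\
    forall u : k.-tuple V, (forall i, tnth u i \in S i) -> E u.
Proof.
elim: k D => [|k IH] D.
  exists 0 => V _ E; rewrite expn0 => dense.
  have [u0] : exists u0 : 0.-tuple V, u0 \in [set u : 0.-tuple V | E u].
    by apply/card_gt0P; move: dense; case: #|_|.
  rewrite inE => Eu0; exists (fun _ => set0); split; first by case.
  by move=> u _; rewrite tuple0 -(tuple0 u0).
have [N IHN] := IH ((4 * D) ^ h * (2 * D)).
exists (N + 4 * D * h.+1 + 1) => V V_large E dense.
have D_gt0 : 0 < D.
  by rewrite lt0n; apply: contraTneq dense => ->; rewrite muln0 -ltnNge expn_gt0; lia.
have [|S Sh slice] := dense_slice_extension (h := h) D_gt0 _ dense; first by lia.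
have [|Ss [Ss_large Ss_box]] :=
  IHN V _ (fun s => [forall y in S, E (y :: s)]) slice; first by lia.
exists (fun i => if unlift ord0 i is Some j then Ss j else S); split.
  by move=> i; case: unliftP => [j _|_]; rewrite ?Sh.
case/tupleP => y t in_box.
have := in_box ord0; rewrite tnth0 unlift_none => yS.
suff /forall_inP : [forall y in S, E (y :: t)] by apply.
by apply: Ss_box => j; have := in_box (lift ord0 j); rewrite tnthS liftK.
Qed.

Definition nbhd_clique (U : eqType) (eG : rel U) (v : U) (s : seq U) :=
  pairwise eG s && all (eG v) s.

(* Together with v, the clique s spans a complete graph minus the edge between
   v and the head of s; in the application the head is the vertex of s in the
   class of v. *)
Definition rooted_clique (U : eqType) (eG : rel U) (v : U) (s : seq U) :=
  [&& head v s != v, pairwise eG s & all (eG v) (behead s)].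

Definition rooted_blowup (U : finType) (eG : rel U) k (S : 'I_k -> {set U})
    (i0 : 'I_k) (v : U) (h : nat) : Prop :=
  [/\ forall i, h <= #|S i|,
      forall i j, i != j -> {in S i & S j, forall z w, eG z w},
      forall i, i != i0 -> {in S i, forall w, eG v w} &
      v \notin S i0].

Lemma rooted_blowup_of_box (U : finType) (eG : rel U) r
    (S : 'I_r.+1 -> {set U}) v h :
  (forall x y, eG x y = eG y x) -> (forall i, h.+1 <= #|S i|) ->
  (forall u : r.+1.-tuple U, (forall i, tnth u i \in S i) -> rooted_clique eG v u) ->
  rooted_blowup eG S ord0 v h.
Proof.
move=> eG_sym S_large box.
pose pick i := nth v (enum (S i)) 0.
have pickS i : pick i \in S i.
  by rewrite -mem_enum mem_nth // -cardE (leq_trans _ (S_large i)).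
pose tup p q z w :=
  [tuple if i == p then z else if i == q then w else pick i | i < r.+1].
have tupE p q z w : z \in S p -> w \in S q -> rooted_clique eG v (tup p q z w).
  move=> zS wS; apply: box => i; rewrite tnth_mktuple.
  by case: eqP => [->//|_]; case: eqP => [->//|_].
have tup_p p q z w : tnth (tup p q z w) p = z by rewrite tnth_mktuple eqxx.
have tup_q p q z w : p != q -> tnth (tup p q z w) q = w.
  by move=> pq; rewrite tnth_mktuple eq_sym (negbTE pq) eqxx.
have pairwise_tnth (u : r.+1.-tuple U) (i j : 'I_r.+1) :
    rooted_clique eG v u -> i < j -> eG (tnth u i) (tnth u j).
  case/and3P => _ /(pairwiseP v) pw _ ij; rewrite !(tnth_nth v).
  by apply: pw; rewrite ?inE ?size_tuple.
split => [i | i j ij z w zi wj | i i0 w wi | ].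
- exact: ltnW.
- suff : eG (tnth (tup i j z w) i) (tnth (tup i j z w) j) by rewrite tup_p tup_q.
  have rooted := tupE i j z w zi wj.
  case: (ltngtP i j) => [lt_ij|lt_ji|/val_inj eq_ij].
  + exact: pairwise_tnth.
  + by rewrite eG_sym; apply: pairwise_tnth.
  + by rewrite eq_ij eqxx in ij.
- have /and3P [_ _ /(all_nthP v) root_adj] := tupE i i w w wi wi.
  have i_gt0 : 0 < i by rewrite lt0n.
  have := root_adj i.-1; rewrite nth_behead prednK // -tnth_nth tup_p.
  by apply; rewrite size_behead size_tuple; have := ltn_ord i; lia.
- apply/negP => vS; have /and3P [] := tupE ord0 ord0 v v vS vS.
  by have := tup_p ord0 ord0 v v; rewrite (tnth_nth v) nth0 => ->; rewrite eqxx.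
Qed.

Lemma copy_of_rooted_blowup (T U : finType) (e : rel T) (eG : rel U) k
    (c : T -> 'I_k) (x0 : T) (S : 'I_k -> {set U}) (v : U) :
  simple_graph eG -> proper_colouring e c -> rooted_blowup eG S (c x0) v #|T| ->
  copy_containing e eG v.
Proof.
move=> [eG_sym eG_irr] c_proper [S_large S_cross S_root v_notin].
pose g x := nth v (enum (S (c x))) (enum_rank x).
have rank_lt i (z : T) : enum_rank z < size (enum (S i)).
  by rewrite -cardE; exact: leq_trans (ltn_ord _) (S_large i).
have g_in x : g x \in S (c x) by rewrite -mem_enum mem_nth.
have g_inj x y : c x = c y -> g x = g y -> x = y.
  move=> cxy /eqP; rewrite /g cxy nth_uniq ?enum_uniq //.
  by move/eqP/val_inj/enum_rank_inj.
have v_ne_g y : v != g y.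
  have [cy|cy] := eqVneq (c y) (c x0).
    by apply: contraNneq v_notin => ->; rewrite -cy.
  by apply: contraTneq (S_root _ cy _ (g_in y)) => ->; rewrite eG_irr.
pose f x := if x == x0 then v else g x.
exists f; split; last split; last by exists x0; rewrite /f eqxx.
- move=> x y; rewrite /f.
  case: (eqVneq x x0) => [->|xn]; case: (eqVneq y x0) => [->|yn] //.
  + by move/eqP; rewrite (negbTE (v_ne_g y)).
  + by move/esym/eqP; rewrite (negbTE (v_ne_g x)).
  have [cxy|cxy] := eqVneq (c x) (c y); first exact: g_inj.
  by move=> gxy; have := S_cross _ _ cxy _ _ (g_in x) (g_in y); rewrite gxy eG_irr.
- move=> x y /c_proper cxy; rewrite /f.
  case: (eqVneq x x0) => [ex|xn]; case: (eqVneq y x0) => [ey|yn].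
  + by rewrite ex ey eqxx in cxy.
  + by apply: S_root (g_in y); rewrite -ex eq_sym.
  + by rewrite eG_sym; apply: S_root (g_in x); rewrite -ey.
  + exact: S_cross cxy _ _ (g_in x) (g_in y).
Qed.

Lemma card_all_union_bound (I : Type) (B : finType) (P : I -> pred B) (L : seq I) :
  #|B| <= #|[set b | all (P^~ b) L]| + \sum_(x <- L) #|[set b | ~~ P x b]|.
Proof.
elim: L => [|x L IH].
  by rewrite big_nil addn0; apply: subset_leq_card; apply/subsetP => b; rewrite inE.
rewrite big_cons; set A := [set b | all _ L] in IH.
have -> : [set b | all (P^~ b) (x :: L)] = [set b | P x b] :&: A.
  by apply/setP => b; rewrite !inE.
have := cardsID [set b | P x b] A.
have : #|A :\: [set b | P x b]| <= #|[set b | ~~ P x b]|.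
  by apply: subset_leq_card; apply/subsetP => b; rewrite !inE => /andP[].
rewrite setIC; lia.
Qed.

Lemma card_fibre_leq (A B : finType) (a : A) (Q : pred (A * B)) :
  #|[set b | Q (a, b)]| <= #|[set y | Q y]|.
Proof.
have pair_inj : injective (pair a : B -> A * B) by move=> b1 b2 [].
rewrite -(card_imset _ pair_inj).
by apply: subset_leq_card; apply/subsetP => y /imsetP [b]; rewrite !inE => Qb ->.
Qed.

Lemma exists_notin (T : finType) (s : seq T) : size s < #|T| -> exists x, x \notin s.
Proof.
move=> small; apply/existsP; apply: contraTT small => /existsPn all_in.
rewrite -leqNgt (leq_trans _ (card_size s)) //.
by apply: subset_leq_card; apply/subsetP => x _; have := all_in x; rewrite negbK.
Qed.

Section CommonNeighbourhoods.

Variables (r n K : nat) (eG : rel ('I_r.+1 * 'I_n)).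
Hypothesis eG_balanced : balanced_rpartite eG.
(* The degree condition for the r.+1 classes, scaled to avoid division: each
   vertex misses at most n/r - n/K vertices of every other class. *)
Hypothesis nonnbrs_small : forall i j a, i != j ->
  K * r * #|[set b | ~~ eG (i, a) (j, b)]| + r * n <= K * n.
Hypothesis K_gt0 : 0 < K.

Lemma card_common_nbhd (k : 'I_r.+1) (L : seq ('I_r.+1 * 'I_n)) :
  (forall x, x \in L -> x.1 != k) -> size L <= r ->
  size L * n <= K * #|[set b | all (fun x => eG x (k, b)) L]|.
Proof.
move=> L_avoids_k L_small.
have union := card_all_union_bound (fun x b => eG x (k, b)) L.
rewrite card_ord in union.
have sum_small : \sum_(x <- L) (K * r * #|[set b | ~~ eG x (k, b)]| + r * n) <=
                 \sum_(x <- L) K * n.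
  by rewrite !big_seq; apply: leq_sum => -[i a] /L_avoids_k; apply: nonnbrs_small.
rewrite big_split /= -!big_distrr /= big_const_seq count_predT iter_addn_0 in sum_small.
move: union sum_small; set C := #|_|; set nd := \sum_(_ <- _) _; set l := size L.
move=> union sum_small.
have : r * (l * n) <= r * (K * C).
  have : K * r * n <= K * r * C + K * r * nd by rewrite -mulnDr leq_mul2l union orbT.
  have : l * K * n <= r * K * n by rewrite !leq_mul2r L_small !orbT.
  nia.
have [r0|r_gt0] := posnP r; last by rewrite leq_pmul2l.
by have -> : l = 0 by rewrite /l; lia.
Qed.

Let eG_sym : forall x y, eG x y = eG y x := eG_balanced.1.1.

Lemma pairwise_cons_common y s :
  all (eG^~ y) s -> pairwise eG s -> pairwise eG (y :: s).
Proof. by move=> /allP adj /= ->; rewrite andbT; apply/allP => x /adj; rewrite eG_sym. Qed.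

Lemma nbhd_clique_extensions v s : nbhd_clique eG v s -> size s < r ->
  n %/ K <= #|[set y | nbhd_clique eG v (y :: s)]|.
Proof.
case/andP => clique adj small.
have [k k_free] : exists k, k \notin map fst (v :: s).
  by apply: exists_notin; rewrite size_map card_ord.
have avoids x : x \in v :: s -> x.1 != k.
  by move=> xL; apply: contraNneq k_free => <-; apply: map_f.
have := card_common_nbhd avoids small; rewrite /=; set C := #|_| => large.
apply: leq_trans (card_fibre_leq k _).
apply: leq_trans (_ : C <= _).
  rewrite -(leq_pmul2r K_gt0) (leq_trans (leq_divM _ _)) //; nia.
apply: subset_leq_card; apply/subsetP => b; rewrite !inE /= => /andP [vb common].
by rewrite /nbhd_clique pairwise_cons_common //= vb adj.
Qed.

Hypothesis K_le_n : K <= n.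
Hypothesis r_gt1 : 1 < r.

Lemma rooted_clique_extensions v t : nbhd_clique eG v t -> size t = r ->
  n %/ K <= #|[set y | rooted_clique eG v (y :: t)]|.
Proof.
case/andP => clique adj size_t.
have avoids x : x \in t -> x.1 != v.1.
  move=> /(allP adj); apply: contraTneq => same_class.
  by rewrite (surjective_pairing v) (surjective_pairing x) same_class eG_balanced.2.
have := card_common_nbhd avoids; rewrite size_t leqnn; set A := [set b | _].
move/(_ isT) => large.
apply: leq_trans (card_fibre_leq v.1 _).
apply: leq_trans (_ : #|A :\ v.2| <= _).
  have := cardsD1 v.2 A; have : (n %/ K).+1 <= #|A|.
    rewrite -(leq_pmul2r K_gt0) mulSn (leq_trans (leq_add K_le_n (leq_divM _ _))) //.
    nia.
  case: (v.2 \in A) => /=; lia.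
apply: subset_leq_card; apply/subsetP => b; rewrite !inE /= => /andP [bv common].
rewrite /rooted_clique pairwise_cons_common //= adj andbT.
by apply: contra bv => /eqP <-.
Qed.

Lemma card_rooted_cliques v :
  (n %/ K) ^ r.+1 <= #|[set u : r.+1.-tuple _ | rooted_clique eG v u]|.
Proof.
have extend := @card_tuple_extend _ r (n %/ K) _ (rooted_clique eG v)
  (fun t clique => rooted_clique_extensions clique (size_tuple t)).
rewrite expnSr (leq_trans _ extend) // leq_mul2r card_tuple_nested ?orbT //.
exact: nbhd_clique_extensions.
Qed.

End CommonNeighbourhoods.

Lemma exists_rooted_blowup r K h : 1 < r -> 0 < K ->
  exists n0, forall n (eG : rel ('I_r.+1 * 'I_n)), n0 <= n ->
    balanced_rpartite eG ->
    (forall i j a, i != j ->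
       K * r * #|[set b | ~~ eG (i, a) (j, b)]| + r * n <= K * n) ->
    forall v, exists S, rooted_blowup eG S (ord0 : 'I_r.+1) v h.
Proof.
move=> r_gt1 K_gt0.
have [N box] := dense_tuples_contain_box r.+1 h.+1 ((2 * K * r.+1) ^ r.+1).
exists (N + K) => n eG n_large eG_balanced nonnbrs_small v.
have K_le_n : K <= n by lia.
have n_le : n <= n %/ K * (2 * K).
  have := divn_eq n K; have := ltn_pmod n K_gt0.
  have : 0 < n %/ K by rewrite divn_gt0.
  nia.
have dense : #|{: 'I_r.+1 * 'I_n}| ^ r.+1 <=
             #|[set u : r.+1.-tuple _ | rooted_clique eG v u]| * (2 * K * r.+1) ^ r.+1.
  rewrite card_prod !card_ord.
  apply: leq_trans (_ : (n %/ K * (2 * K * r.+1)) ^ r.+1 <= _).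
    by rewrite leq_exp2r //; nia.
  by rewrite expnMn leq_mul2r card_rooted_cliques ?orbT.
have [|S [S_large S_box]] := box _ _ (rooted_clique eG v) dense.
  by rewrite card_prod !card_ord; nia.
by exists S; apply: rooted_blowup_of_box => //; apply: eG_balanced.1.1.
Qed.

Lemma card_set_predC (T : finType) (P : pred T) :
  #|[set x | ~~ P x]| = #|T| - #|[set x | P x]|.
Proof.
by rewrite -(cardsC [set x | P x]) addKn; apply: eq_card => x; rewrite !inE.
Qed.

Lemma proper_colouring_perm (T : finType) (e : rel T) k (c : T -> 'I_k)
    (s : {perm 'I_k}) :
  proper_colouring e c -> proper_colouring e (s \o c).
Proof. by move=> c_proper x y /c_proper; rewrite /= (inj_eq perm_inj). Qed.

Lemma card_gt0_of_not_colourable (T : finType) (e : rel T) k :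
  0 < k -> ~ colourable e k -> 0 < #|T|.
Proof.
move=> k_gt0 not_col; rewrite lt0n; apply/negP => /eqP /card0_eq T0.
by apply: not_col; exists (fun _ => Ordinal k_gt0) => x; have := T0 x.
Qed.

From Stdlib Require Import Reals Lra.

Lemma exists_nat_inv_le (alpha : R) : (0 < alpha)%R ->
  exists2 K : nat, 0 < K & (1 <= alpha * INR K)%R.
Proof.
move=> alpha_gt0; have [K K_large] := INR_unbounded (/ alpha).
have K_pos : (0 < INR K)%R by have := Rinv_0_lt_compat alpha alpha_gt0; lra.
exists K; first by apply/ltP; apply: INR_lt; rewrite /=; lra.
have := Rmult_lt_compat_l alpha _ _ alpha_gt0 K_large.
by rewrite Rinv_r; lra.
Qed.

Lemma nonnbrs_small_of_degree r n K deg (alpha : R) :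
  1 < r -> deg <= n -> (1 <= alpha * INR K)%R ->
  (INR deg >= INR (r - 2) / INR (r - 1) * INR n + alpha * INR n)%R ->
  K * (r - 1) * (n - deg) + (r - 1) * n <= K * n.
Proof.
move=> r_gt1 deg_le_n alphaK deg_large.
have r2 : INR (r - 2) = (INR (r - 1) - 1)%R.
  by rewrite (_ : r - 1 = (r - 2).+1) ?S_INR; [lra | lia].
have q_ge1 : (1 <= INR (r - 1))%R.
  by rewrite (_ : r - 1 = (r - 2).+1) ?S_INR; [have := pos_INR (r - 2); lra | lia].
apply/leP; apply: INR_le.
rewrite -!multE -!plusE -!minusE !plus_INR !mult_INR (minus_INR n deg); last by apply/leP.
move: deg_large q_ge1 alphaK; rewrite r2.
set q := INR (r - 1); set N := INR n; set d := INR deg; set k := INR K.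
move=> deg_large q_ge1 alphaK.
have N_ge0 : (0 <= N)%R by apply: pos_INR.
have k_ge0 : (0 <= k)%R by apply: pos_INR.
have qd : ((q - 1) * N + alpha * q * N <= q * d)%R.
  have -> : ((q - 1) * N + alpha * q * N)%R = (q * ((q - 1) / q * N + alpha * N))%R.
    by field; apply: Rgt_not_eq; lra.
  by apply: Rmult_le_compat_l; lra.
have := Rmult_le_compat_l k _ _ k_ge0 qd.
have qN_ge0 : (0 <= q * N)%R by nra.
have : (q * N <= alpha * k * (q * N))%R by nra.
nra.
Qed.

Theorem proposition2p6 (T : finType) (e : rel T) (r : nat) :
  simple_graph e -> chromatic_number_is e r -> 3 <= r -> gcd_is_one e r ->
  forall alpha : R, (0 < alpha)%R ->
  exists n0 : nat, forall (n : nat) (eG : rel ('I_r * 'I_n)),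
    n0 <= n -> balanced_rpartite eG ->
    (forall (i j : 'I_r) (a : 'I_n), i != j ->
       (INR #|[set b : 'I_n | eG (i, a) (j, b)]| >=
          INR (r - 2) / INR (r - 1) * INR n + alpha * INR n)%R) ->
    forall v : 'I_r * 'I_n, copy_containing e eG v.
Proof.
(* The copy of H is found in a complete blow-up of K_r. *)
move=> _ [[c c_proper] not_col] r_ge3 _ alpha alpha_gt0.
have T_gt0 : 0 < #|T| by apply: card_gt0_of_not_colourable not_col; lia.
have [x0 _] := card_gt0P T_gt0.
have [K K_gt0 alphaK] := exists_nat_inv_le alpha_gt0.
case: r c c_proper {not_col} r_ge3 => // r c c_proper r_ge3.
have [|n0 blowup] := @exists_rooted_blowup r K #|T| _ K_gt0; first by lia.
exists n0 => n eG n_large eG_balanced degree v.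
have nonnbrs_small i j a : i != j ->
    K * r * #|[set b | ~~ eG (i, a) (j, b)]| + r * n <= K * n.
  move=> ij; rewrite card_set_predC card_ord.
  have := nonnbrs_small_of_degree _ _ alphaK (degree i j a ij).
  rewrite subn1 /=; apply; first by lia.
  by rewrite -[X in _ <= X](card_ord n) max_card.
have [S S_blowup] := blowup n eG n_large eG_balanced nonnbrs_small v.
apply: (@copy_of_rooted_blowup _ _ _ _ _ (tperm (c x0) ord0 \o c) x0 S).
- exact: eG_balanced.1.
- exact: proper_colouring_perm.
- by rewrite /= tpermL.
Qed.
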